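(* Let $n\ge 1$, let $\Omega\subset\mathbb{R}^n$ be a domain, and let $\boldsymbol{\alpha}:\mathbb{R}^n\times\mathbb{R}^n\to\mathbb{R}^n$ be a nonlocal weight function satisfying $\boldsymbol{\alpha}(\mathbf{x},\mathbf{x}')=-\boldsymbol{\alpha}(\mathbf{x}',\mathbf{x})$ for all $\mathbf{x},\mathbf{x}'$. Define the interaction (volume-constrained boundary) region $$\Omega_\tau=\{\mathbf{x}'\in\mathbb{R}^n\setminus\Omega \;:\; \exists\,\mathbf{x}\in\Omega \text{ with } \boldsymbol{\alpha}(\mathbf{x},\mathbf{x}')\neq\mathbf{0}\}.$$ Let $\boldsymbol{\Theta}(\mathbf{x},\mathbf{x}')$ be a fourth-order tensor field on $(\Omega\cup\Omega_\tau)\times(\Omega\cup\Omega_\tau)$ with components satisfying $\Theta_{ijkl}=\Theta_{jikl}=\Theta_{ijlk}=\Theta_{klij}$ and $\boldsymbol{\Theta}(\mathbf{x},\mathbf{x}')=\boldsymbol{\Theta}(\mathbf{x}',\mathbf{x})$. For vector fields $\mathbf{w}$ on $\Omega\cup\Omega_\tau$ and second-order tensor fields $\boldsymbol{\Psi}(\mathbf{x},\mathbf{x}')$ on $(\Omega\cup\Omega_\tau)^2$ define $$\mathcal{D}^*(\mathbf{w})(\mathbf{x},\mathbf{x}')=-[\mathbf{w}(\mathbf{x}')-\mathbf{w}(\mathbf{x})]\otimes\boldsymbol{\alpha}(\mathbf{x},\mathbf{x}'),$$ $$\mathcal{D}(\boldsymbol{\Psi})(\mathbf{x})=\int_{\Omega\cup\Omega_\tau}[\boldsymbol{\Psi}(\mathbf{x},\mathbf{x}')+\boldsymbol{\Psi}(\mathbf{x}',\mathbf{x})]\cdot\boldsymbol{\alpha}(\mathbf{x},\mathbf{x}')\,dV_{\mathbf{x}'}\quad(\mathbf{x}\in\Omega),$$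 $$\mathcal{N}(\boldsymbol{\Psi})(\mathbf{x})=-\int_{\Omega\cup\Omega_\tau}[\boldsymbol{\Psi}(\mathbf{x},\mathbf{x}')+\boldsymbol{\Psi}(\mathbf{x}',\mathbf{x})]\cdot\boldsymbol{\alpha}(\mathbf{x},\mathbf{x}')\,dV_{\mathbf{x}'}\quad(\mathbf{x}\in\Omega_\tau),$$ where $(\boldsymbol{\Theta}:\mathbf{A})_{ij}=\Theta_{ijkl}A_{kl}$ and $(\boldsymbol{\Psi}\cdot\boldsymbol{\alpha})_i=\Psi_{ij}\alpha_j$. Then for any two vector fields $\mathbf{v}_1,\mathbf{v}_2$ on $\Omega\cup\Omega_\tau$ for which all the integrals involved converge absolutely, $$\int_{\Omega}\Big[\mathbf{v}_1(\mathbf{x})\cdot\mathcal{D}\big(\boldsymbol{\Theta}:\mathcal{D}^*(\mathbf{v}_2)\big)(\mathbf{x})-\mathbf{v}_2(\mathbf{x})\cdot\mathcal{D}\big(\boldsymbol{\Theta}:\mathcal{D}^*(\mathbf{v}_1)\big)(\mathbf{x})\Big]dV_{\mathbf{x}}$$ $$=\int_{\Omega_\tau}\Big[\mathbf{v}_1(\mathbf{x})\cdot\mathcal{N}\big(\boldsymbol{\Theta}:\mathcal{D}^*(\mathbf{v}_2)\big)(\mathbf{x})-\mathbf{v}_2(\mathbf{x})\cdot\mathcal{N}\big(\boldsymbol{\Theta}:\mathcal{D}^*(\mathbf{v}_1)\big)(\mathbf{x})\Big]dV_{\mathbf{x}}.$$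
   Context: This is the nonlocal (peridynamic) reciprocal theorem for linear elasticity, formulated with the nonlocal divergence operator $\mathcal{D}$, its adjoint-type operator $\mathcal{D}^*$, and the nonlocal interaction (traction) operator $\mathcal{N}$. Since $\boldsymbol{\alpha}(\mathbf{x},\mathbf{x}')\ne\mathbf{0}$ with $\mathbf{x}\in\Omega$ forces $\mathbf{x}'\in\Omega\cup\Omega_\tau$, integrating over $\Omega\cup\Omega_\tau$ in $\mathcal{D}$ is the same as integrating over $\mathbb{R}^n$. Note $\Omega\cap\Omega_\tau=\emptyset$. *)

From HB Require Import structures.
From mathcomp Require Import all_boot all_order all_algebra.
From mathcomp Require Import all_classical all_reals all_analysis.
Set Implicit Arguments. Unset Strict Implicit. Unset Printing Implicit Defensive.
Import Order.TTheory GRing.Theory Num.Theory.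
Import numFieldNormedType.Exports.
Local Open Scope classical_set_scope.
Local Open Scope ring_scope.

(* Points of R^n are represented as n.-tuple R; this type carries the
   product (Borel) sigma-algebra generated by the coordinate projections. *)

Definition lebesgue_box_volume (R : realType) (n : nat)
  (mu : set (n.-tuple R) -> \bar R) : Prop :=
  forall a b : n.-tuple R,
    mu [set x | forall i : 'I_n, tnth a i <= tnth x i < tnth b i]
    = (\prod_(i < n) Num.max 0 (tnth b i - tnth a i))%:E.

(* coordinates map into the normed space 'rV[R]_n (for topology) *)
Definition rV_of_tuple (R : realType) (n : nat) (x : n.-tuple R) : 'rV[R]_n :=
  \row_(i < n) tnth x i.

Definition is_domain (R : realType) (n : nat) (Omega : set (n.-tuple R)) : Prop :=
  Omega !=set0 /\ open (@rV_of_tuple R n @` Omega)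
  /\ connected (@rV_of_tuple R n @` Omega).

(* vectors in R^n are functions 'I_n -> R; second/fourth order tensors are
   functions of 2/4 indices. *)
Definition nonzero_vec (R : realType) (n : nat) (a : 'I_n -> R) : Prop :=
  exists j, a j != 0.

Definition Omega_tau (R : realType) (n : nat)
  (alpha : n.-tuple R -> n.-tuple R -> 'I_n -> R) (Omega : set (n.-tuple R))
  : set (n.-tuple R) :=
  [set x' | ~ Omega x' /\ exists2 x, Omega x & nonzero_vec (alpha x x')].

Definition Dstar (R : realType) (n : nat)
  (alpha : n.-tuple R -> n.-tuple R -> 'I_n -> R)
  (w : n.-tuple R -> 'I_n -> R) : n.-tuple R -> n.-tuple R -> 'I_n -> 'I_n -> R :=
  fun x x' i j => - ((w x' i - w x i) * alpha x x' j).

Definition ddot (R : realType) (n : nat)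
  (Theta : n.-tuple R -> n.-tuple R -> 'I_n -> 'I_n -> 'I_n -> 'I_n -> R)
  (A : n.-tuple R -> n.-tuple R -> 'I_n -> 'I_n -> R)
  : n.-tuple R -> n.-tuple R -> 'I_n -> 'I_n -> R :=
  fun x x' i j => \sum_(k < n) \sum_(l < n) Theta x x' i j k l * A x x' k l.

Definition Dintegrand (R : realType) (n : nat)
  (alpha : n.-tuple R -> n.-tuple R -> 'I_n -> R)
  (Psi : n.-tuple R -> n.-tuple R -> 'I_n -> 'I_n -> R)
  (x : n.-tuple R) (i : 'I_n) : n.-tuple R -> R :=
  fun x' => \sum_(j < n) (Psi x x' i j + Psi x' x i j) * alpha x x' j.

Definition Dop (R : realType) (n : nat) (mu : {measure set (n.-tuple R) -> \bar R})
  (U : set (n.-tuple R))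
  (alpha : n.-tuple R -> n.-tuple R -> 'I_n -> R)
  (Psi : n.-tuple R -> n.-tuple R -> 'I_n -> 'I_n -> R)
  : n.-tuple R -> 'I_n -> R :=
  fun x i => Rintegral mu U (Dintegrand alpha Psi x i).

Definition Nop (R : realType) (n : nat) (mu : {measure set (n.-tuple R) -> \bar R})
  (U : set (n.-tuple R))
  (alpha : n.-tuple R -> n.-tuple R -> 'I_n -> R)
  (Psi : n.-tuple R -> n.-tuple R -> 'I_n -> 'I_n -> R)
  : n.-tuple R -> 'I_n -> R :=
  fun x i => - Rintegral mu U (Dintegrand alpha Psi x i).

Definition vdot (R : realType) (n : nat) (a b : 'I_n -> R) : R :=
  \sum_(i < n) a i * b i.

From HB Require Import structures.
From mathcomp Require Import all_boot all_order all_algebra.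
From mathcomp Require Import all_classical all_reals all_analysis.
From mathcomp Require Import ring lra.
Import Order.TTheory GRing.Theory Num.Theory.
Import numFieldNormedType.Exports.
Local Open Scope classical_set_scope.
Local Open Scope ring_scope.
Set Implicit Arguments. Unset Strict Implicit.

(* Write Psi_w := Theta : D^*(w) and
     K(x, x') := v1(x) . [(Psi_v2(x,x') + Psi_v2(x',x)) . alpha(x,x')] - (1 <-> 2).
   Both sides of the identity are integrals of x |-> \int_U K(x, x') dx', with
   U = Omega u Omega_tau, over Omega and (with a sign flip, since N = -D) over
   Omega_tau.  Expanding Psi_w, K(x, x') becomes a combination of the bilinear
   forms B_{x x'}(p, q) = Theta_ijkl p_i alpha_j q_k alpha_l ([bond_form]), which
   are symmetric in (p, q) by the major symmetry of Theta and in (x, x') by the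
   symmetry of Theta and the antisymmetry of alpha; hence K(x', x) = -K(x, x').
   By Fubini the double integral of an antisymmetric kernel over U x U
   vanishes, and splitting U into the disjoint sets Omega and Omega_tau gives
   the theorem. *)

Section Rintegral_complements.
Context d (T : measurableType d) (R : realType).
Variables (mu : {measure set T -> \bar R}) (D : set T).
Hypothesis mD : measurable D.

Lemma Rintegral_EFin (f : T -> R) : mu.-integrable D (EFin \o f) ->
  (\int[mu]_(x in D) f x)%:E = (\int[mu]_(x in D) (f x)%:E)%E.
Proof. by move=> fi; rewrite fineK // (integrable_fin_num mD fi). Qed.

Lemma RintegralN (f : T -> R) : mu.-integrable D (EFin \o f) ->
  \int[mu]_(x in D) - f x = - \int[mu]_(x in D) f x.
Proof.
by move=> fi; under eq_Rintegral do rewrite -mulN1r; rewrite RintegralZl // mulN1r.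
Qed.

Lemma integrable_EFinN (f : T -> R) : mu.-integrable D (EFin \o f) ->
  mu.-integrable D (EFin \o (fun x => - f x)).
Proof. by move=> fi; apply: (eq_integrable mD _ _ _ (integrableN fi)) => x _. Qed.

Lemma integrable_EFinB (f g : T -> R) :
  mu.-integrable D (EFin \o f) -> mu.-integrable D (EFin \o g) ->
  mu.-integrable D (EFin \o (fun x => f x - g x)).
Proof.
by move=> fi gi; apply: (eq_integrable mD _ _ _ (integrableB mD fi gi)) => x _.
Qed.

Lemma integrable_sum_EFin (I : Type) (s : seq I) (f : I -> T -> R) :
  (forall i, mu.-integrable D (EFin \o f i)) ->
  mu.-integrable D (EFin \o (fun x => \sum_(i <- s) f i x)).
Proof.
move=> fi; have -> : EFin \o (fun x => \sum_(i <- s) f i x)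
                     = (fun x => \sum_(i <- s) (f i x)%:E)%E.
  by apply/funext => x /=; rewrite sumEFin.
by apply: (integrable_sum mD) => i _; exact: fi.
Qed.

Lemma Rintegral_sum (I : Type) (s : seq I) (f : I -> T -> R) :
  (forall i, mu.-integrable D (EFin \o f i)) ->
  \int[mu]_(x in D) \sum_(i <- s) f i x = \sum_(i <- s) \int[mu]_(x in D) f i x.
Proof.
move=> fi; elim: s => [|i s IHs].
  by under eq_Rintegral do rewrite big_nil; rewrite big_nil /Rintegral integral0.
under eq_Rintegral do rewrite big_cons.
by rewrite big_cons RintegralD ?IHs //; exact: integrable_sum_EFin.
Qed.

Lemma integrable_vdot n (a : 'I_n -> R) (g : 'I_n -> T -> R) :
  (forall i, mu.-integrable D (EFin \o g i)) ->
  mu.-integrable D (EFin \o (fun y => vdot a (fun i => g i y))).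
Proof.
by move=> gi; apply: integrable_sum_EFin => i; exact: (integrableZl mD _ (gi i)).
Qed.

Lemma Rintegral_vdot n (a : 'I_n -> R) (g : 'I_n -> T -> R) :
  (forall i, mu.-integrable D (EFin \o g i)) ->
  \int[mu]_(y in D) vdot a (fun i => g i y)
  = vdot a (fun i => \int[mu]_(y in D) g i y).
Proof.
move=> gi; rewrite /vdot Rintegral_sum => [|i]; last first.
  exact: (integrableZl mD _ (gi i)).
by apply: eq_bigr => i _; rewrite RintegralZl.
Qed.

End Rintegral_complements.

Section antisymmetric_kernel.
Context d (T : measurableType d) (R : realType).
Variables (mu : {sigma_finite_measure set T -> \bar R}) (U : set T).
Variable k : T -> T -> R.
Hypothesis mU : measurable U.
Hypothesis k_int : forall x, U x -> mu.-integrable U (EFin \o k x).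
Hypothesis k_int2 :
  (mu \x mu)%E.-integrable (U `*` U) (fun p => (k p.1 p.2)%:E).

Let kU := (fun p => (k p.1 p.2)%:E) \_ (U `*` U).

Let kU_int : (mu \x mu)%E.-integrable setT kU.
Proof. exact/(integrable_mkcond _ (measurableX mU mU)).1. Qed.

Let kU_sectionl x :
  (\int[mu]_y kU (x, y))%E = ((fun x => (\int[mu]_(y in U) k x y)%:E) \_ U) x.
Proof.
rewrite patchE; case: ifPn => [/set_mem xU|xU].
  rewrite Rintegral_EFin ?k_int // integral_mkcond; apply: eq_integral => y _.
  by rewrite /kU !patchE in_setX mem_set.
rewrite -[RHS](integral0 mu setT); apply: eq_integral => y _.
by rewrite /kU patchE in_setX (negbTE xU).
Qed.

Lemma integrable_Rintegral_kernel :
  mu.-integrable U (fun x => (\int[mu]_(y in U) k x y)%:E).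
Proof.
apply/(integrable_mkcond _ mU).
have <- : fubini_F mu kU = (fun x => (\int[mu]_(y in U) k x y)%:E) \_ U.
  by apply/funext => x; rewrite /fubini_F kU_sectionl.
exact: integrable_fubini_F kU_int.
Qed.

Lemma Rintegral_antisymmetric_kernel : {in U &, forall x y, k y x = - k x y} ->
  \int[mu]_(x in U) \int[mu]_(y in U) k x y = 0.
Proof.
move=> k_anti; have k_intU := integrable_Rintegral_kernel.
have kU_sectionr y : (\int[mu]_x kU (x, y))%E
    = ((fun y => (- \int[mu]_(x in U) k y x)%:E) \_ U) y.
  rewrite patchE; case: ifPn => [/set_mem yU|yU].
    rewrite -(RintegralN mU (k_int yU)).
    rewrite (Rintegral_EFin mU (integrable_EFinN mU (k_int yU))).
    rewrite integral_mkcond; apply: eq_integral => x _.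
    rewrite /kU !patchE in_setX (mem_set yU) andbT.
    by case: ifPn => // /set_mem xU; rewrite (k_anti y x) ?mem_set.
  rewrite -[RHS](integral0 mu setT); apply: eq_integral => x _.
  by rewrite /kU patchE in_setX (negbTE yU) andbF.
have E1 : (\int[mu]_x \int[mu]_y kU (x, y)
           = (\int[mu]_(x in U) \int[mu]_(y in U) k x y)%:E)%E.
  rewrite Rintegral_EFin // integral_mkcond.
  by apply: eq_integral => x _; exact: kU_sectionl.
have E2 : (\int[mu]_y \int[mu]_x kU (x, y)
           = (- \int[mu]_(x in U) \int[mu]_(y in U) k x y)%:E)%E.
  rewrite -RintegralN // Rintegral_EFin ?integrable_EFinN // integral_mkcond.
  by apply: eq_integral => y _; exact: kU_sectionr.
by have := Fubini kU_int; rewrite E1 E2 => -[]; lra.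
Qed.

End antisymmetric_kernel.

Section reciprocity_kernel.
Variables (R : realType) (n : nat).
Variable alpha : n.-tuple R -> n.-tuple R -> 'I_n -> R.
Variable Theta : n.-tuple R -> n.-tuple R -> 'I_n -> 'I_n -> 'I_n -> 'I_n -> R.

Definition bond_form (x y : n.-tuple R) (p q : 'I_n -> R) : R :=
  \sum_(i < n) \sum_(j < n) \sum_(k < n) \sum_(l < n)
    Theta x y i j k l * (p i * q k * (alpha x y j * alpha x y l)).

Lemma vdot_Dintegrand (u w : n.-tuple R -> 'I_n -> R) (x y : n.-tuple R) :
  (forall i j k l, Theta y x i j k l = Theta x y i j k l) ->
  (forall j, alpha y x j = - alpha x y j) ->
  vdot (u x) (fun i => Dintegrand alpha (ddot Theta (Dstar alpha w)) x i y)
  = -2 * (bond_form x y (u x) (w y) - bond_form x y (u x) (w x)).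
Proof.
move=> ThetaC alphaN.
rewrite /vdot /bond_form -sumrB mulr_sumr; apply: eq_bigr => i _.
rewrite /Dintegrand -sumrB !mulr_sumr; apply: eq_bigr => j _.
rewrite /ddot /Dstar.
set P := \sum_(k < n) _.
(* Theta : D^*(w) takes the same value at (x, y) and at (y, x). *)
have -> : \sum_(k < n) \sum_(l < n)
            Theta y x i j k l * - ((w x k - w y k) * alpha y x l) = P.
  by apply: eq_bigr => k _; apply: eq_bigr => l _; rewrite ThetaC alphaN; ring.
rewrite (_ : u x i * ((P + P) * alpha x y j) = 2 * u x i * alpha x y j * P);
  last by ring.
rewrite /P -sumrB !mulr_sumr; apply: eq_bigr => k _.
by rewrite -sumrB !mulr_sumr; apply: eq_bigr => l _; ring.
Qed.

Lemma bond_formC (x y : n.-tuple R) (p q : 'I_n -> R) :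
  (forall i j k l, Theta x y i j k l = Theta x y k l i j) ->
  bond_form x y p q = bond_form x y q p.
Proof.
move=> Theta_major; rewrite /bond_form.
under eq_bigr do rewrite exchange_big.
rewrite exchange_big /=; apply: eq_bigr => k _.
under eq_bigr do rewrite exchange_big.
rewrite exchange_big /=; apply: eq_bigr => l _.
apply: eq_bigr => i _; apply: eq_bigr => j _.
by rewrite Theta_major; ring.
Qed.

Lemma bond_form_swap (x y : n.-tuple R) (p q : 'I_n -> R) :
  (forall i j k l, Theta y x i j k l = Theta x y i j k l) ->
  (forall j, alpha y x j = - alpha x y j) ->
  bond_form y x p q = bond_form x y p q.
Proof.
move=> ThetaC alphaN; do 4![apply: eq_bigr => ? _].
by rewrite ThetaC !alphaN; ring.
Qed.

Definition reciprocity_kernel (v1 v2 : n.-tuple R -> 'I_n -> R) (x y : n.-tuple R) :=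
  vdot (v1 x) (fun i => Dintegrand alpha (ddot Theta (Dstar alpha v2)) x i y)
  - vdot (v2 x) (fun i => Dintegrand alpha (ddot Theta (Dstar alpha v1)) x i y).

Lemma reciprocity_kernel_antisym (v1 v2 : n.-tuple R -> 'I_n -> R) (x y : n.-tuple R) :
  (forall a b j, alpha a b j = - alpha b a j) ->
  (forall i j k l, Theta y x i j k l = Theta x y i j k l) ->
  (forall i j k l, Theta x y i j k l = Theta x y k l i j) ->
  reciprocity_kernel v1 v2 y x = - reciprocity_kernel v1 v2 x y.
Proof.
move=> alphaN ThetaC Theta_major.
have ThetaC' i j k l : Theta x y i j k l = Theta y x i j k l by rewrite ThetaC.
rewrite /reciprocity_kernel !vdot_Dintegrand // !(bond_form_swap (x:=x) (y:=y)) //.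
rewrite (bond_formC (v1 x) (v2 x)) // (bond_formC (v1 y) (v2 y)) //.
rewrite (bond_formC (v1 y) (v2 x)) // (bond_formC (v2 y) (v1 x)) //.
by ring.
Qed.

End reciprocity_kernel.

Section reciprocity_kernel_integral.
Variables (R : realType) (n : nat) (mu : {measure set (n.-tuple R) -> \bar R}).
Variables (U : set (n.-tuple R)) (alpha : n.-tuple R -> n.-tuple R -> 'I_n -> R).
Variable Theta : n.-tuple R -> n.-tuple R -> 'I_n -> 'I_n -> 'I_n -> 'I_n -> R.
Variables (v1 v2 : n.-tuple R -> 'I_n -> R) (x : n.-tuple R).
Hypothesis mU : measurable U.
Hypothesis int1 : forall i,
  mu.-integrable U (EFin \o Dintegrand alpha (ddot Theta (Dstar alpha v1)) x i).
Hypothesis int2 : forall i,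
  mu.-integrable U (EFin \o Dintegrand alpha (ddot Theta (Dstar alpha v2)) x i).

Lemma integrable_reciprocity_kernel :
  mu.-integrable U (EFin \o reciprocity_kernel alpha Theta v1 v2 x).
Proof.
by apply: (integrable_EFinB mU);
  apply: (integrable_vdot mU); [exact: int2 | exact: int1].
Qed.

Lemma Rintegral_reciprocity_kernel :
  \int[mu]_(y in U) reciprocity_kernel alpha Theta v1 v2 x y
  = vdot (v1 x) (Dop mu U alpha (ddot Theta (Dstar alpha v2)) x)
    - vdot (v2 x) (Dop mu U alpha (ddot Theta (Dstar alpha v1)) x).
Proof. by rewrite RintegralB ?integrable_vdot // !Rintegral_vdot. Qed.

End reciprocity_kernel_integral.

Lemma vdot_Nop (R : realType) (n : nat) (mu : {measure set (n.-tuple R) -> \bar R})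
    U alpha Psi (a : 'I_n -> R) (x : n.-tuple R) :
  vdot a (Nop mu U alpha Psi x) = - vdot a (Dop mu U alpha Psi x).
Proof. by rewrite /vdot -sumrN; apply: eq_bigr => i _; rewrite mulrN. Qed.

Lemma disjoint_Omega_tau (R : realType) (n : nat) alpha (Omega : set (n.-tuple R)) :
  [disjoint Omega & Omega_tau alpha Omega].
Proof. by apply/disj_setPS => x [xO [xnO _]]; exact: xnO xO. Qed.

Theorem mainTheorem1 (R : realType) (n : nat)
  (mu : {sigma_finite_measure set (n.-tuple R) -> \bar R})
  (Omega : set (n.-tuple R))
  (alpha : n.-tuple R -> n.-tuple R -> 'I_n -> R)
  (Theta : n.-tuple R -> n.-tuple R -> 'I_n -> 'I_n -> 'I_n -> 'I_n -> R)
  (v1 v2 : n.-tuple R -> 'I_n -> R) :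
  (0 < n)%N ->
  lebesgue_box_volume mu ->
  is_domain Omega ->
  (forall x x' j, alpha x x' j = - alpha x' x j) ->
  (* symmetries of Theta on (Omega u Omega_tau)^2 *)
  (forall x x', (Omega `|` Omega_tau alpha Omega) x ->
     (Omega `|` Omega_tau alpha Omega) x' -> forall i j k l,
     [/\ Theta x x' i j k l = Theta x x' j i k l,
         Theta x x' i j k l = Theta x x' i j l k,
         Theta x x' i j k l = Theta x x' k l i j &
         Theta x x' i j k l = Theta x' x i j k l]) ->
  (* the integrals involved make sense and converge absolutely: *)
  measurable Omega ->
  measurable (Omega_tau alpha Omega) ->
  (let U := Omega `|` Omega_tau alpha Omega in
   let Psi w := ddot Theta (Dstar alpha w) in
   (* inner integrals defining D and N *)
   (forall w, w = v1 \/ w = v2 -> forall x, U x -> forall i,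
      mu.-integrable U (fun x' => (Dintegrand alpha (Psi w) x i x')%:E)) /\
   (* the double integrals, as integrals over U x U *)
   (forall w u, w = v1 \/ w = v2 -> u = v1 \/ u = v2 -> forall i,
      (mu \x mu)%E.-integrable (U `*` U)
        (fun p => (u p.1 i * Dintegrand alpha (Psi w) p.1 i p.2)%:E)) /\
   (* the outer integrals *)
   mu.-integrable Omega (fun x =>
      (vdot (v1 x) (Dop mu U alpha (Psi v2) x)
       - vdot (v2 x) (Dop mu U alpha (Psi v1) x))%:E) /\
   mu.-integrable (Omega_tau alpha Omega) (fun x =>
      (vdot (v1 x) (Nop mu U alpha (Psi v2) x)
       - vdot (v2 x) (Nop mu U alpha (Psi v1) x))%:E)) ->
  let U := Omega `|` Omega_tau alpha Omega in
  let Psi w := ddot Theta (Dstar alpha w) in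
  Rintegral mu Omega (fun x =>
      vdot (v1 x) (Dop mu U alpha (Psi v2) x)
    - vdot (v2 x) (Dop mu U alpha (Psi v1) x))
  = Rintegral mu (Omega_tau alpha Omega) (fun x =>
      vdot (v1 x) (Nop mu U alpha (Psi v2) x)
    - vdot (v2 x) (Nop mu U alpha (Psi v1) x)).
Proof.
move=> _ _ _ alphaN Theta_sym mO mOt [inner_int [prod_int _]] U Psi.
have mU : measurable U by exact: measurableU.
have inner_int1 x : U x -> forall i,
    mu.-integrable U (EFin \o Dintegrand alpha (Psi v1) x i).
  by move=> xU i; apply: inner_int => //; left.
have inner_int2 x : U x -> forall i,
    mu.-integrable U (EFin \o Dintegrand alpha (Psi v2) x i).
  by move=> xU i; apply: inner_int => //; right.
set K := reciprocity_kernel alpha Theta v1 v2.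
have K_int x (xU : U x) :=
  integrable_reciprocity_kernel mU (inner_int1 x xU) (inner_int2 x xU).
have KE x (xU : U x) :=
  Rintegral_reciprocity_kernel mU (inner_int1 x xU) (inner_int2 x xU).
have K_int2 : (mu \x mu)%E.-integrable (U `*` U) (fun p => (K p.1 p.2)%:E).
  have mUU : measurable (U `*` U) by exact: measurableX.
  by apply: (integrable_EFinB mUU); apply: (integrable_sum_EFin mUU) => i;
    apply: prod_int => //; by [left | right].
have K_anti : {in U &, forall x y, K y x = - K x y}.
  move=> x y /set_mem xU /set_mem yU; apply: reciprocity_kernel_antisym => // i j k l.
  - by have [_ _ _ ->] := Theta_sym y x yU xU i j k l.
  - by have [_ _ -> _] := Theta_sym x y xU yU i j k l.
have KU_int := integrable_Rintegral_kernel mU K_int K_int2.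
transitivity (\int[mu]_(x in Omega) \int[mu]_(y in U) K x y).
  by apply: eq_Rintegral => x /set_mem xO; rewrite KE //; left.
transitivity (- \int[mu]_(x in Omega_tau alpha Omega) \int[mu]_(y in U) K x y).
  apply/eqP; rewrite -addr_eq0 -Rintegral_setU ?disjoint_Omega_tau //.
  exact/eqP/(Rintegral_antisymmetric_kernel mU K_int K_int2 K_anti).
rewrite -RintegralN //; last by apply: integrableS KU_int => // x Ox; right.
apply: eq_Rintegral => x /set_mem xOt; rewrite !vdot_Nop KE; last by right.
by rewrite opprB opprK addrC.
Qed.
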